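(* Let $\mathcal{A}$ be a finite abelian group with $|\mathcal{A}|\ge 3$. Let $M_{10}(p_1,p_2)$ be the graph consisting of the $4$-cycle $v_1v_2v_3v_4v_1$ and the triangle $v_1v_5v_6$ (sharing the vertex $v_1$), together with $p_1\ge0$ pendant vertices adjacent to $v_1$ and $p_2\ge 0$ pendant vertices adjacent to $v_2$. Then $M_{10}(p_1,p_2)$ is $\mathcal{A}$-vertex magic if and only if $p_1=p_2=0$ and $|\mathcal{A}|$ is even.
   Context: A map $\ell:V(G)\to\mathcal{A}\setminus\{0\}$ is an $\mathcal{A}$-vertex magic labeling if there is $\mu\in\mathcal{A}$ with $\sum_{u\in N(v)}\ell(u)=\mu$ for every vertex $v$; $G$ is $\mathcal{A}$-vertex magic if such a labeling exists. A pendant vertex has degree $1$. *)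

From HB Require Import structures.
From mathcomp Require Import all_boot all_order all_algebra.
Set Implicit Arguments. Unset Strict Implicit. Unset Printing Implicit Defensive.
Import GRing.Theory.
Local Open Scope ring_scope.

Definition vertex_magic_labeling (T : finType) (adj : rel T) (A : zmodType)
  (l : T -> A) (mu : A) : Prop :=
  (forall v, l v != 0) /\ (forall v, \sum_(u | adj v u) l u = mu).

Definition vertex_magic (T : finType) (adj : rel T) (A : zmodType) : Prop :=
  exists (l : T -> A) (mu : A), vertex_magic_labeling adj l mu.

(* Vertex indexing of M10(p1,p2) on 'I_(6 + p1 + p2):
   0..5  = v1..v6,
   6 .. 6+p1-1        = pendant vertices adjacent to v1,
   6+p1 .. 6+p1+p2-1  = pendant vertices adjacent to v2. *)
Definition M10_edge_nat (p1 p2 : nat) (i j : nat) : bool :=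
  [|| ((i == 0) && (j == 1))%N, ((i == 1) && (j == 2))%N, ((i == 2) && (j == 3))%N,
      ((i == 3) && (j == 0))%N, ((i == 0) && (j == 4))%N, ((i == 4) && (j == 5))%N,
      ((i == 5) && (j == 0))%N,
      [&& i == 0, 6 <= j & j < 6 + p1]%N
    | [&& i == 1, 6 + p1 <= j & j < 6 + p1 + p2]%N].

Definition M10_adj (p1 p2 : nat) : rel 'I_(6 + p1 + p2) :=
  fun i j => M10_edge_nat p1 p2 i j || M10_edge_nat p1 p2 j i.

(** The degree-two vertices force the labels: the two outer triangle vertices
    v5, v6 see each other and v1, so they carry equal labels, and v3 sees only
    v2, v4. A pendant vertex forces the label of its neighbour to be the magic
    constant, which would give v6 (if p1 > 0) or v4 (if p2 > 0) the label 0.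
    Without pendants, comparing the sums at v1 and v3 gives 2 l(v6) = 0 with
    l(v6) <> 0, so A has an element of order 2 and |A| is even. Conversely, if
    |A| is even, Cauchy's theorem gives x of order 2, and the constant labeling
    x is magic with constant 0 because every vertex of M10(0,0) has even
    degree. *)

From HB Require Import structures.
From mathcomp Require Import all_boot all_order all_algebra zify.
From mathcomp Require Import fingroup cyclic pgroup finalg.
Set Implicit Arguments. Unset Strict Implicit. Unset Printing Implicit Defensive.
Import GRing.Theory FinRing.Theory.

Local Open Scope ring_scope.

Lemma order2_zmodE (A : finZmodType) (x : A) :
  (#[x]%g == 2)%N = (x != 0) && (x + x == 0).
Proof.
have order_dvd2 : (#[x]%g %| 2)%N = (x + x == 0).
  by rewrite order_dvdn zmodXgE mulr2n zmod1gE.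
have order_neq1 : (#[x]%g != 1)%N = (x != 0) by rewrite order_eq1 zmod1gE.
apply/eqP/andP => [o2 | [x_neq0 xx0]].
  by rewrite -order_dvd2 -order_neq1 o2.
have order_nt : (#[x]%g != 1)%N by rewrite order_neq1.
by apply/(@prime_nt_dvdP _ 2 isT order_nt); rewrite order_dvd2.
Qed.

Lemma even_card_zmodP (A : finZmodType) :
  reflect (exists2 x : A, x != 0 & x + x = 0) (~~ odd #|A|).
Proof.
rewrite -dvdn2 -cardsT; apply: (iffP idP) => [two_dvd | [x x_neq0 xx0]].
  have [x _ o2] := @Cauchy _ 2 [set: A]%G isT two_dvd.
  have /andP[x_neq0 /eqP xx0] : (x != 0) && (x + x == 0) by rewrite -order2_zmodE o2.
  by exists x.
have /eqP <- : (#[x]%g == 2)%N by rewrite order2_zmodE x_neq0 xx0 eqxx.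
exact: (@order_dvdG _ [set: A]%G _ (in_setT x)).
Qed.

Lemma even_degree_vertex_magic (T : finType) (adj : rel T) (A : zmodType) (x : A) :
  x != 0 -> x + x = 0 -> (forall v, ~~ odd #|adj v|) -> vertex_magic adj A.
Proof.
move=> x_neq0 xx0 even_deg; exists (fun=> x), 0; split=> // v.
rewrite sumr_const -[#|_|](odd_double_half) (negbTE (even_deg v)) add0n.
by rewrite -muln2 mulnC mulrnA mulr2n xx0 mul0rn.
Qed.

Section VertexMagicLabeling.

Variables (T : finType) (adj : rel T) (A : zmodType) (l : T -> A) (mu : A).
Hypothesis magic : vertex_magic_labeling adj l mu.

Lemma magic_sum_nbhd v (s : seq T) : adj v =i s -> uniq s -> \sum_(u <- s) l u = mu.
Proof.
move=> nbhd_v uniq_s; rewrite big_uniq // -(magic.2 v).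
by apply: eq_bigl => u; rewrite -nbhd_v.
Qed.

Lemma magic_pendant_nbr u w : adj u =i [:: w] -> l w = mu.
Proof. by move/magic_sum_nbhd; rewrite big_seq1; apply. Qed.

Lemma magic_pair_nbhd v a b : a != b -> adj v =i [:: a; b] -> l a + l b = mu.
Proof.
move=> a_neq_b /magic_sum_nbhd; rewrite big_cons big_seq1; apply.
by rewrite /= inE a_neq_b.
Qed.

Lemma pendant_nbr_not_deg2_nbr u v w b :
  w != b -> adj u =i [:: w] -> adj v =i [:: w; b] -> False.
Proof.
move=> w_neq_b /magic_pendant_nbr lw /(magic_pair_nbhd w_neq_b).
rewrite lw -{2}[mu]addr0 => /addrI lb0.
by have := magic.1 b; rewrite lb0 eqxx.
Qed.

End VertexMagicLabeling.

Definition M10_vertex {p1 p2 : nat} (i : 'I_6) : 'I_(6 + p1 + p2) :=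
  lshift p2 (lshift p1 i).

Definition M10_pendant1 {p1 p2 : nat} (j : 'I_p1) : 'I_(6 + p1 + p2) :=
  lshift p2 (rshift 6 j).

Definition M10_pendant2 {p1 p2 : nat} (j : 'I_p2) : 'I_(6 + p1 + p2) :=
  rshift (6 + p1) j.

Notation "''v_' k" := (M10_vertex (@Ordinal 6 k.-1 isT))
  (at level 8, k at level 2, format "''v_' k").

Section M10Neighbourhoods.

Context {p1 p2 : nat}.
Local Notation adj := (@M10_adj p1 p2).

Ltac nbhd_by_arith := move=> u; rewrite !inE /M10_adj /M10_edge_nat -!val_eqE /=; lia.

Lemma M10_nbhd_v1 : p1 = 0%N -> adj 'v_1 =i [:: 'v_2; 'v_4; 'v_5; 'v_6].
Proof. move=> p1_0; nbhd_by_arith. Qed.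

Lemma M10_nbhd_v3 : adj 'v_3 =i [:: 'v_2; 'v_4].
Proof. nbhd_by_arith. Qed.

Lemma M10_nbhd_v5 : adj 'v_5 =i [:: 'v_1; 'v_6].
Proof. nbhd_by_arith. Qed.

Lemma M10_nbhd_v6 : adj 'v_6 =i [:: 'v_1; 'v_5].
Proof. nbhd_by_arith. Qed.

Lemma M10_nbhd_pendant1 j : adj (M10_pendant1 j) =i [:: 'v_1].
Proof. have lt_j := ltn_ord j; nbhd_by_arith. Qed.

Lemma M10_nbhd_pendant2 j : adj (M10_pendant2 j) =i [:: 'v_2].
Proof. have lt_j := ltn_ord j; nbhd_by_arith. Qed.

End M10Neighbourhoods.

Lemma M10_degree_even v : ~~ odd #|@M10_adj 0 0 v|.
Proof.
by case: v => [[|[|[|[|[|[|k]]]]]] lt_k6];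
  rewrite -sum1_card big_mkcond !big_ord_recl big_ord0.
Qed.

Section M10MagicLabeling.

Variables (p1 p2 : nat) (A : zmodType) (l : 'I_(6 + p1 + p2) -> A) (mu : A).
Hypothesis magic : vertex_magic_labeling (@M10_adj p1 p2) l mu.

Lemma M10_label_v5_v6 : l 'v_5 = l 'v_6.
Proof.
apply: (@addrI _ (l 'v_1)).
by rewrite (magic_pair_nbhd magic _ M10_nbhd_v6) ?(magic_pair_nbhd magic _ M10_nbhd_v5).
Qed.

Lemma M10_no_pendant_v1 : p1 = 0%N.
Proof.
case: (posnP p1) => // p1_gt0; exfalso.
have pendant := M10_nbhd_pendant1 (p2 := p2) (Ordinal p1_gt0).
by apply: (pendant_nbr_not_deg2_nbr magic _ pendant M10_nbhd_v5).
Qed.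

Lemma M10_no_pendant_v2 : p2 = 0%N.
Proof.
case: (posnP p2) => // p2_gt0; exfalso.
have pendant := M10_nbhd_pendant2 (p1 := p1) (Ordinal p2_gt0).
by apply: (pendant_nbr_not_deg2_nbr magic _ pendant M10_nbhd_v3).
Qed.

Lemma M10_double_label_v6 : p1 = 0%N -> l 'v_6 + l 'v_6 = 0.
Proof.
move=> p1_0; have := magic_sum_nbhd magic (M10_nbhd_v1 p1_0) isT.
rewrite !big_cons big_nil addr0 addrA (magic_pair_nbhd magic _ M10_nbhd_v3) //.
by rewrite -{2}[mu]addr0 M10_label_v5_v6 => /addrI.
Qed.

End M10MagicLabeling.

Theorem proposition4p9 (A : finZmodType) (p1 p2 : nat) :
  (3 <= #|A|)%N ->
  (vertex_magic (@M10_adj p1 p2) A <->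
   (p1 = 0%N /\ p2 = 0%N /\ ~~ odd #|A|)).
Proof.
move=> _; split=> [[l [mu magic]] | [-> [-> /even_card_zmodP [x x_neq0 xx0]]]].
  have p1_0 := M10_no_pendant_v1 magic.
  have p2_0 := M10_no_pendant_v2 magic.
  split=> //; split=> //.
  apply/even_card_zmodP; exists (l 'v_6); first exact: magic.1.
  exact: M10_double_label_v6 magic p1_0.
exact: even_degree_vertex_magic x_neq0 xx0 M10_degree_even.
Qed.
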